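(* Let $\mathfrak g = \bigoplus_i \mathfrak I_i$ be a decomposition of $\mathfrak g$ into ideals which are pairwise orthogonal for an $\mathrm{Ad}_G$-invariant nondegenerate symmetric bilinear form on $\mathfrak g$, let $\mathfrak t_i = \mathfrak t\cap\mathfrak I_i$, $\Phi_{\mathfrak I_i}$ the root system of $(\mathfrak I_i,\mathfrak t_i)$ (so that $\mathfrak t = \bigoplus_i \mathfrak t_i$, $\Phi_{\mathfrak g} = \bigsqcup_i \Phi_{\mathfrak I_i}$, and $W_{\mathfrak g} = \prod_i W_{\mathfrak I_i}$ with $W_{\mathfrak I_i} = W(\Phi_{\mathfrak I_i})$ acting on $\mathfrak t_i$ and trivially on the other summands). Let $\Phi\subseteq \Phi_{\mathfrak g}$ be a root subsystem, $\Phi^{(i)} = \Phi\cap\Phi_{\mathfrak I_i}$, $$\mathbf B = \bigcap_{\alpha\in\Phi}\ker(\alpha)\cap\bigcap_{\alpha\in\Phi_{\mathfrak g}\setminus\Phi}(\mathfrak t\setminus\ker\alpha),\qquad \mathbf B_i = \bigcap_{\alpha\in\Phi^{(i)}}\ker(\alpha)\cap\bigcap_{\alpha\in\Phi_{\mathfrak I_i}\setminus\Phi^{(i)}}(\mathfrak t_i\setminus\ker\alpha)\subseteq\mathfrak t_i .$$ Let $\overline{\mathbf B}$ be the topological quotient of $\mathbf B$ by the relation $X\sim Y$ iff $W_{\mathfrak g}X = W_{\mathfrak g}Y$, and $\overline{\mathbf B}_i$ the topological quotient of $\mathbf B_i$ by the relation $X\sim Y$ iff $W_{\mathfrak I_i}X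 = W_{\mathfrak I_i}Y$. Then $\overline{\mathbf B}$ is homeomorphic to the product $\prod_i\overline{\mathbf B}_i$.
   Context: $G$ is a connected complex reductive Lie group, $\mathfrak g = \mathrm{Lie}(G)$, $T\subseteq G$ a maximal torus, $\mathfrak t = \mathrm{Lie}(T)$, $\Phi_{\mathfrak g}$ the root system of $(\mathfrak g,\mathfrak t)$, $W_{\mathfrak g}$ the Weyl group acting on $\mathfrak t$. Roots of $\Phi_{\mathfrak I_i}$ are regarded as elements of $\mathfrak t^\vee$ vanishing on $\mathfrak t_j$ for $j\ne i$. Empty intersections of kernels are the whole ambient space. *)

From HB Require Import structures.
From mathcomp Require Import all_boot all_order all_algebra.
From mathcomp Require Import all_classical all_reals all_analysis.
From mathcomp Require Import complex.
Set Implicit Arguments.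
Unset Strict Implicit.
Unset Printing Implicit Defensive.
Import Order.TTheory GRing.Theory Num.Theory.
Import numFieldTopology.Exports numFieldNormedType.Exports.
Local Open Scope classical_set_scope.
Local Open Scope ring_scope.

(* The complex numbers C = R[i] over a real field R : realType, packaged
   as a numClosedFieldType so that it carries its usual (modulus) topology. *)
Definition CC (R : realType) : numClosedFieldType := (R[i]%C : numClosedFieldType).

Section Quot.
Context {T : topologicalType} (r : T -> T -> Prop).

Definition quot_class (x : T) : set T := [set y | r x y].

Definition quotient_space : Type := {S : set T | exists x, S = quot_class x}.

HB.instance Definition _ := gen_eqMixin quotient_space.
HB.instance Definition _ := gen_choiceMixin quotient_space.

Definition quot_map (x : T) : quotient_space :=
  exist _ (quot_class x) (ex_intro _ x erefl).

Definition quot_open (U : set quotient_space) := open (quot_map @^-1` U).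

Program Definition quot_topological_mixin :=
  @isOpenTopological.Build quotient_space quot_open _ _ _.
Next Obligation. by rewrite /quot_open preimage_setT; exact: openT. Qed.
Next Obligation. by move=> ? ? ? ?; exact: openI. Qed.
Next Obligation. by move=> I f ofi; apply: bigcup_open => i _; exact: ofi. Qed.
HB.instance Definition _ := quot_topological_mixin.

End Quot.

Definition homeomorphic (X Y : topologicalType) : Prop :=
  exists (f : X -> Y) (g : Y -> X),
    [/\ cancel f g, cancel g f, continuous f & continuous g].

(* Linear algebra of a Cartan subalgebra t_i = C^n (row vectors) and   *)
(* its dual (column vectors a, acting by X |-> X a).                   *)
Section RootData.
Variable K : numClosedFieldType.

Definition feval n (a : 'cV[K]_n) (X : 'rV[K]_n) : K := (X *m a) 0 0.

(* the bilinear form on t^vee induced by the (nondegenerate, symmetric,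
   invariant) form on t with Gram matrix S *)
Definition dual_pairing n (S : 'M[K]_n) (a b : 'cV[K]_n) : K :=
  (a^T *m invmx S *m b) 0 0.

(* coroot h_a = 2 t_a / (a, a), where t_a is dual to a under S *)
Definition coroot n (S : 'M[K]_n) (a : 'cV[K]_n) : 'rV[K]_n :=
  (2 / dual_pairing S a a) *: (invmx S *m a)^T.

(* reflection s_a : X |-> X - a(X) h_a, acting on row vectors on the right
   (X |-> X *m refl_mx S a); on forms it acts by b |-> refl_mx S a *m b *)
Definition refl_mx n (S : 'M[K]_n) (a : 'cV[K]_n) : 'M[K]_n :=
  1%:M - a *m coroot S a.

Definition weyl_group n (S : 'M[K]_n) (Phi : set ('cV[K]_n)) : set ('M[K]_n) :=
  [set w | forall G : set ('M[K]_n), G 1%:M ->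
      (forall v a, G v -> Phi a -> G (v *m refl_mx S a)) -> G w].

Definition is_root_system n (S : 'M[K]_n) (Phi : set ('cV[K]_n)) : Prop :=
  [/\ finite_set Phi, ~ Phi 0,
      (forall a, Phi a -> dual_pairing S a a != 0) /\
      (forall a b, Phi a -> Phi b -> Phi (refl_mx S a *m b)),
      (forall a b, Phi a -> Phi b ->
          exists z : int, feval b (coroot S a) = z%:~R)
    & (forall a c, Phi a -> Phi (c *: a) -> c = 1 \/ c = -1)].

Definition nondeg_sym_form n (S : 'M[K]_n) : Prop := S^T = S /\ S \in unitmx.

End RootData.

(* The global objects: t = (+)_i t_i, Phi_g = disjoint union of the     *)
(* Phi_{I_i} (roots of I_i extended by 0 on t_j, j <> i), W_g = prod_i  *)
(* W_{I_i} acting componentwise.                                       *)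
Unset Implicit Arguments.
Section Global.
Variables (R : realType) (I : finType) (n : I -> nat).
Variables (S : forall i, 'M[CC R]_(n i)) (PhiI : forall i, set ('cV[CC R]_(n i))).

Definition cartan : topologicalType := prod_topology (fun i => 'rV[CC R]_(n i)).

Definition groot : Type := {i : I & 'cV[CC R]_(n i)}.

Definition Phi_g : set groot := fun ia => match ia with existT i a => PhiI i a end.

Definition root_subsystem (Phi : set groot) : Prop :=
  Phi `<=` Phi_g /\
  (forall i a b, Phi (existT _ i a) -> Phi (existT _ i b) ->
     Phi (existT _ i (refl_mx (S i) a *m b))).

Definition orbit_g (X : cartan) : set cartan :=
  [set Y | exists w : forall i, 'M[CC R]_(n i),
      (forall i, weyl_group (S i) (PhiI i) (w i)) /\
      Y = (fun i => X i *m w i)].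

Definition orbit_i (i : I) (Y : 'rV[CC R]_(n i)) : set ('rV[CC R]_(n i)) :=
  [set Z | exists w, weyl_group (S i) (PhiI i) w /\ Z = Y *m w].

Variable Phi : set groot.

Definition Phi_i (i : I) : set ('cV[CC R]_(n i)) := [set a | Phi (existT _ i a)].

Definition Bset : set cartan :=
  [set X | (forall i a, Phi (existT _ i a) -> feval a (X i) = 0) /\
           (forall i a, Phi_g (existT _ i a) -> ~ Phi (existT _ i a) ->
                        feval a (X i) != 0)].

Definition Bset_i (i : I) : set ('rV[CC R]_(n i)) :=
  [set Y | (forall a, Phi_i i a -> feval a Y = 0) /\
           (forall a, PhiI i a -> ~ Phi_i i a -> feval a Y != 0)].

Definition Bbar : topologicalType :=
  quotient_space (fun X Y : set_type Bset => orbit_g (val X) = orbit_g (val Y)).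

Definition Bbar_i (i : I) : topologicalType :=
  quotient_space (fun X Y : set_type (Bset_i i) =>
                    orbit_i i (val X) = orbit_i i (val Y)).

End Global.

From HB Require Import structures.
From mathcomp Require Import all_boot all_order all_algebra.
From mathcomp Require Import all_classical all_reals all_analysis.
Import numFieldTopology.Exports numFieldNormedType.Exports.
Local Open Scope classical_set_scope.
Local Open Scope ring_scope.
Import Order.TTheory GRing.Theory Num.Theory.
Set Implicit Arguments. Unset Strict Implicit.

(* In t = (+)_i t_i the face B is the product of the faces B_i, and two points
   of B are W_g-conjugate iff their components are W_{I_i}-conjugate.  Hence
   B -> prod_i Bbar_i is a continuous surjection identifying exactly the
   W_g-conjugate points.  It is also open: each B_i -> Bbar_i is, since the
   saturation of an open set is the union of its translates by those Weyl group
   elements that map some point of B_i into B_i, and such an element maps all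
   of B_i into B_i.  An open continuous surjection is a quotient map. *)

Lemma mx_continuous {X T : topologicalType} {m n} (h : X -> 'M[T]_(m, n)) :
  (forall i j, continuous (fun x => h x i j)) -> continuous h.
Proof.
move=> hc x A [P HP sPA].
have : \forall y \near x, forall p : 'I_m * 'I_n, P p.1 p.2 (h y p.1 p.2).
  by apply: filter_forall => p; exact: (hc p.1 p.2 x _ (HP p.1 p.2)).
by apply: filterS => y Py; apply: sPA => i j; exact: (Py (i, j)).
Qed.

Lemma mulmxr_continuous (K : numFieldType) p q r (M : 'M[K]_(q, r)) :
  continuous (fun Y : 'M[K]_(p, q) => Y *m M).
Proof.
apply: mx_continuous => i j; under eq_fun do rewrite mxE.
apply: (@continuous_big _ _ +%R 0 xpredT add_continuous) => k _ Y.
by apply: continuousM; [exact: coord_continuous | exact: cst_continuous].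
Qed.

Lemma prod_topology_continuous {X : topologicalType} {I : Type}
    {K : I -> topologicalType} (h : X -> prod_topology K) :
  (forall i, continuous (fun x => h x i)) -> continuous h.
Proof.
move=> hc x; apply/(@cvg_sup _ _ (fun i =>
  Topological.class (initial_topology (fun f : forall i, K i => f i)))) => i.
exact: (@continuous_comp_initial _ _ _ (fun f : forall i, K i => f i) h).
Qed.

Lemma prod_nbhs_box {I : eqType} {K : I -> topologicalType}
    (x : prod_topology K) (U : set (prod_topology K)) :
  nbhs x U -> exists2 N : forall i, set (K i),
    (forall i, nbhs (x i) (N i)) & [set y | forall i, N i (y i)] `<=` U.
Proof.
pose F := [set U : set (prod_topology K) | exists2 N : forall i, set (K i),
    (forall i, nbhs (x i) (N i)) & [set y | forall i, N i (y i)] `<=` U].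
have FF : Filter F.
  split.
  - by exists (fun=> setT) => // i; exact: filterT.
  - move=> A B [N HN sN] [M HM sM]; exists (fun i => N i `&` M i).
      by move=> i; exact: filterI.
    by move=> y Hy; split; [apply: sN | apply: sM] => i; case: (Hy i).
  - by move=> A B AB [N HN sN]; exists N => // y /sN /AB.
suff : (F : set_system (prod_topology K)) --> x by move=> /(_ U).
apply/(@cvg_sup _ _ (fun i =>
  Topological.class (initial_topology (fun f : forall i, K i => f i))) F x FF).
move=> i A [V [[W oW <-] Wx] sub].
exists (dfwith (fun=> setT) i W).
  move=> j; case: dfwithP => [|k ?]; last exact: filterT.
  exact: open_nbhs_nbhs.
by move=> y /(_ i); rewrite dfwithin => Wy; exact: sub.
Qed.

Lemma box_set_inj {I : eqType} {T : I -> Type} (A B : forall i, set (T i))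
    (a : forall i, T i) :
  (forall i, A i (a i)) ->
  [set x | forall i, A i (x i)] = [set x | forall i, B i (x i)] -> A = B.
Proof.
move=> Aa AB; have Ba : [set x | forall i, B i (x i)] a by rewrite -AB.
apply: functional_extensionality_dep => i; apply/seteqP; split=> z zi.
  have : [set x | forall i, A i (x i)] (dfwith a i z).
    by move=> j; case: dfwithP.
  by rewrite AB => /(_ i); rewrite dfwithin.
have : [set x | forall i, B i (x i)] (dfwith a i z).
  by move=> j; case: dfwithP => // k _; exact: Ba.
by rewrite -AB => /(_ i); rewrite dfwithin.
Qed.

Section QuotientByFunction.
Context {T : topologicalType} {U : Type} (F : T -> U).
Local Notation Q := (quotient_space (fun x y : T => F x = F y)).
Local Notation q := (quot_map (fun x y : T => F x = F y)).

Lemma quot_map_eq x y : q x = q y <-> F x = F y.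
Proof.
split=> [/(congr1 sval) qxy|Fxy].
  by have : sval (q y) y by []; rewrite -qxy.
apply: eq_sig_hprop => [? ? ?|]; first exact: Prop_irrelevance.
by rewrite /= /quot_class Fxy.
Qed.

Lemma quot_map_surj (c : Q) : exists x, q x = c.
Proof.
case: c => cls [x clsx]; exists x.
by apply: eq_sig_hprop => [? ? ?|]; [exact: Prop_irrelevance | rewrite /= clsx].
Qed.

Lemma quot_map_continuous : continuous q.
Proof. by apply/continuousP => A. Qed.

Lemma quot_lift_continuous (Y : topologicalType) (f : Q -> Y) :
  continuous (f \o q) -> continuous f.
Proof. by move=> /continuousP fqc; apply/continuousP => A /fqc. Qed.

Lemma quot_map_open :
    (forall A, open A -> open [set y | exists2 x, A x & F x = F y]) ->
  forall A, open A -> open (q @` A).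
Proof.
move=> sat_open A /sat_open; congr open; apply/seteqP; split=> y.
  by case=> x Ax Fxy; exists x => //; exact/quot_map_eq.
by case=> x Ax /quot_map_eq Fxy; exists x.
Qed.

Lemma quotient_homeomorphic (P : topologicalType) (h : T -> P) :
    continuous h -> (forall A, open A -> open (h @` A)) ->
    (forall p, exists x, h x = p) -> (forall x y, h x = h y <-> F x = F y) ->
  homeomorphic Q P.
Proof.
move=> hc hopen hsurj hF.
pose rep (c : Q) := projT1 (cid (quot_map_surj c)).
have repK c : q (rep c) = c by rewrite /rep; case: cid.
pose sec (p : P) := projT1 (cid (hsurj p)).
have secK p : h (sec p) = p by rewrite /sec; case: cid.
have hrepq x : h (rep (q x)) = h x by apply/hF/quot_map_eq; rewrite repK.
exists (h \o rep), (q \o sec); split.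
- by move=> c /=; rewrite -[RHS]repK; apply/quot_map_eq/hF; rewrite secK.
- by move=> p /=; rewrite hrepq secK.
- apply: quot_lift_continuous.
  by have -> : (h \o rep) \o q = h by apply: funext => x /=; rewrite hrepq.
- apply/continuousP => V oV.
  have -> : (q \o sec) @^-1` V = h @` (q @^-1` V).
    apply/seteqP; split=> p.
      by move=> Vp; exists (sec p); rewrite ?secK.
    case=> x Vqx <-; rewrite /= (_ : q (sec (h x)) = q x) //.
    by apply/quot_map_eq/hF; rewrite secK.
  exact: hopen oV.
Qed.

End QuotientByFunction.

Section FiniteProduct.
Context {I : finType}.

Lemma prod_nbhs_box_open {K : I -> topologicalType} (N : forall i, set (K i))
    (x : prod_topology K) :
  (forall i, open (N i)) -> (forall i, N i (x i)) ->
  nbhs x [set y : prod_topology K | forall i, N i (y i)].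
Proof.
move=> oN Nx.
have := @filter_forall _ I (fun i (y : prod_topology K) => N i (y i))
  (nbhs x) _.
by apply=> i; apply: proj_continuous; exact: open_nbhs_nbhs.
Qed.

Definition prod_map {X Y : I -> topologicalType} (f : forall i, X i -> Y i)
  (x : prod_topology X) : prod_topology Y := fun i => f i (x i).

Lemma prod_map_continuous {X Y : I -> topologicalType}
    (f : forall i, X i -> Y i) :
  (forall i, continuous (f i)) -> continuous (prod_map f).
Proof.
move=> fc; apply: prod_topology_continuous => i x.
exact: continuous_comp (@proj_continuous _ X i x) (fc i (x i)).
Qed.

Lemma prod_map_open {X Y : I -> topologicalType} (f : forall i, X i -> Y i) :
    (forall i (A : set (X i)), open A -> open (f i @` A)) ->
  forall A : set (prod_topology X), open A -> open (prod_map f @` A).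
Proof.
move=> fopen A; rewrite !openE => oA _ [x Ax <-].
have [N Nx NA] := prod_nbhs_box (oA x Ax : nbhs x A).
apply: filterS
  (prod_nbhs_box_open (fun i => fopen i _ (@open_interior _ (N i))) _).
  move=> y yN; exists (fun i => s2val (cid2 (yN i))).
    by apply: NA => i; apply: interior_subset; exact: s2valP.
  apply: functional_extensionality_dep => i.
  by rewrite /prod_map (s2valP' (cid2 (yN i))).
by move=> i; exists (x i); [exact: Nx|].
Qed.

End FiniteProduct.

Section BoxSubspace.
Context {I : finType} {X : I -> topologicalType} (B : forall i, set (X i))
  (C : set (prod_topology X)).
Arguments B : clear implicits.
Hypothesis C_box : forall x : prod_topology X, C x <-> forall i, B i (x i).

Definition split_box (x : set_type C) :
    prod_topology (fun i => set_type (B i)) :=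
  fun i => exist _ (sval x i)
    (mem_set ((C_box (sval x)).1 (set_mem (valP x)) i)).

Definition glue_box (y : prod_topology (fun i => set_type (B i))) :
    set_type C :=
  exist _ (fun i => sval (y i))
    (mem_set ((C_box _).2 (fun i => set_mem (valP (y i))))).

Lemma glue_boxK : cancel glue_box split_box.
Proof.
by move=> y; apply: functional_extensionality_dep => i; exact: val_inj.
Qed.

Lemma split_box_continuous : continuous split_box.
Proof.
apply: prod_topology_continuous => i.
apply: (@continuous_comp_initial _ _ _ set_val (fun x => split_box x i)).
have -> : set_val \o (fun x => split_box x i) =
          proj i \o (set_val : set_type C -> _).
  by apply: funext => x; rewrite /= !set_valE.
move=> x; apply: continuous_comp; first exact: initial_continuous.
exact: proj_continuous.
Qed.

Lemma split_box_open (A : set (set_type C)) : open A -> open (split_box @` A).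
Proof.
case=> O oO <-; rewrite openE => _ [x Ox <-].
have [N Nx NO] := prod_nbhs_box (open_nbhs_nbhs (conj oO Ox)).
apply: filterS (prod_nbhs_box_open (N := fun i => set_val @^-1` (N i)°) _ _).
- move=> y yN; exists (glue_box y); last exact: glue_boxK.
  by apply: NO => i; apply: interior_subset; exact: yN.
- by move=> i; exists (N i)°; first exact: open_interior.
- by move=> i; exact: Nx.
Qed.

End BoxSubspace.

Section WeylGroup.
Variables (K : numClosedFieldType) (m : nat) (S : 'M[K]_m) (P : set 'cV[K]_m).
Local Notation W := (weyl_group S P).

Lemma weyl_group1 : W 1%:M.
Proof. by move=> G G1 _. Qed.

Lemma weyl_group_ind (Q : 'M[K]_m -> Prop) :
    Q 1%:M -> (forall v a, Q v -> P a -> Q (v *m refl_mx S a)) ->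
  forall w, W w -> Q w.
Proof. by move=> Q1 QS w; apply. Qed.

Lemma weyl_groupMrefl v a : W v -> P a -> W (v *m refl_mx S a).
Proof. by move=> Wv Pa G G1 GS; apply: GS (Wv G G1 GS) Pa. Qed.

Lemma weyl_group_refl a : P a -> W (refl_mx S a).
Proof. by rewrite -[refl_mx S a]mul1mx; apply: weyl_groupMrefl weyl_group1. Qed.

Lemma weyl_groupM u w : W u -> W w -> W (u *m w).
Proof.
move=> Wu; apply: (@weyl_group_ind (fun w => W (u *m w))) => [|v a Wuv Pa].
  by rewrite mulmx1.
by rewrite mulmxA; exact: weyl_groupMrefl.
Qed.

Lemma weyl_group_roots w a :
  (forall b c, P b -> P c -> P (refl_mx S b *m c)) -> W w -> P a -> P (w *m a).
Proof.
move=> P_refl Ww; move: w Ww a.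
apply: (@weyl_group_ind (fun w => forall a, P a -> P (w *m a))).
  by move=> a; rewrite mul1mx.
move=> v b IH Pb a Pa.
by rewrite -mulmxA; apply/IH/P_refl.
Qed.

Lemma coroot_mulmx a :
  S^T = S -> dual_pairing S a a != 0 -> coroot S a *m a = 2%:M.
Proof.
move=> S_sym aa0; rewrite /coroot -scalemxAl trmx_mul trmx_inv S_sym.
by rewrite [a^T *m _ *m _]mx11_scalar scale_scalar_mx divfK.
Qed.

Lemma refl_mx_invol a :
  S^T = S -> dual_pairing S a a != 0 -> refl_mx S a *m refl_mx S a = 1%:M.
Proof.
move=> S_sym /(coroot_mulmx S_sym); rewrite /refl_mx.
move: (coroot S a) => c ca.
rewrite mulmxBl mulmxBr !mul1mx mulmxBr mulmx1 -mulmxA (mulmxA c) ca.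
by rewrite mul_scalar_mx -scalemxAr scaler_nat mulr2n opprB addrK subrK.
Qed.

Lemma weyl_group_inv w :
    S^T = S -> (forall a, P a -> dual_pairing S a a != 0) ->
  W w -> exists2 w', W w' & w *m w' = 1%:M /\ w' *m w = 1%:M.
Proof.
move=> S_sym P_nondeg; move: w.
apply: weyl_group_ind => [|v a [v' Wv' [vv' v'v]] Pa].
  by exists 1%:M; rewrite ?mulmx1 //; exact: weyl_group1.
have ss := refl_mx_invol S_sym (P_nondeg a Pa).
exists (refl_mx S a *m v'); first exact: weyl_groupM (weyl_group_refl Pa) Wv'.
split; first by rewrite -mulmxA (mulmxA (refl_mx S a)) ss mul1mx.
by rewrite -mulmxA (mulmxA v') v'v mul1mx.
Qed.

End WeylGroup.

Section Chambers.
Variables (R : realType) (I : finType) (n : I -> nat).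
Variables (S : forall i, 'M[CC R]_(n i)).
Variables (PhiI : forall i, set ('cV[CC R]_(n i))).
Arguments PhiI : clear implicits.
Hypothesis S_sym : forall i, (S i)^T = S i.
Hypothesis PhiI_root : forall i, is_root_system (S i) (PhiI i).
Variable Phi : set (groot R I n).
Hypothesis Phi_sub : Phi `<=` Phi_g R I n PhiI.

Local Notation W i := (weyl_group (S i) (PhiI i)).
Local Notation orbit_i := (orbit_i R I n S PhiI).
Local Notation orbit_g := (orbit_g R I n S PhiI).
Local Notation B := (Bset R I n PhiI Phi).
Local Notation B_i := (Bset_i R I n PhiI Phi).

Lemma orbit_i_refl i Y : orbit_i i Y Y.
Proof. by exists 1%:M; split; [exact: weyl_group1 | rewrite mulmx1]. Qed.

Lemma orbit_i_eq i Y Z :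
  orbit_i i Y = orbit_i i Z <-> exists2 w, W i w & Y = Z *m w.
Proof.
have [_ _ [nondeg _] _ _] := PhiI_root i.
split=> [YZ|[w Ww ->]].
  by have := orbit_i_refl Y; rewrite YZ => -[w [Ww ->]]; exists w.
have [w' Ww' [ww' _]] := weyl_group_inv (S_sym i) nondeg Ww.
apply/seteqP; split=> X [u [Wu ->]].
  by exists (w *m u); split; [exact: weyl_groupM | rewrite mulmxA].
exists (w' *m u); split; first exact: weyl_groupM.
by rewrite !mulmxA -(mulmxA Z) ww' mulmx1.
Qed.

Lemma orbit_gE X : orbit_g X = [set Y | forall i, orbit_i i (X i) (Y i)].
Proof.
apply/seteqP; split=> Y; first by case=> w [Ww ->] i; exists (w i).
move=> XY; exists (fun i => projT1 (cid (XY i))); split=> [i|].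
  by case: cid => w [].
by apply: functional_extensionality_dep => i; case: cid => w [].
Qed.

Lemma orbit_g_eq X Y :
  orbit_g X = orbit_g Y <-> forall i, orbit_i i (X i) = orbit_i i (Y i).
Proof.
rewrite !orbit_gE; split=> XY; last first.
  by apply/seteqP; split=> Z XZ i; [rewrite -XY | rewrite XY]; exact: XZ.
move=> i; have XX j := orbit_i_refl (X j).
have := box_set_inj (A := fun i => orbit_i i (X i))
  (B := fun i => orbit_i i (Y i)) XX XY.
by move/(congr1 (fun A => A i)).
Qed.

Lemma Bset_box X : B X <-> forall i, B_i i (X i).
Proof.
split=> [[B0 B1] i|BX]; first by split=> *; [exact: B0 | exact: B1].
by split=> *; [exact: (BX _).1 | exact: (BX _).2].
Qed.

(* As [feval a (Y *m w) = feval (w *m a) Y], whether [Y *m w] lies in [B_i]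
   only depends on which roots [w *m a] lie in [Phi^(i)]; the point [Z] shows
   that these are exactly those with [a] in [Phi^(i)]. *)
Lemma Bset_i_mulmx i (w : 'M[CC R]_(n i)) Z Y :
    (forall a, PhiI i a -> PhiI i (w *m a)) ->
    B_i i Z -> B_i i (Z *m w) -> B_i i Y -> B_i i (Y *m w).
Proof.
move=> w_roots [Z0 Z1] [Zw0 Zw1] [Y0 Y1].
have fevalM a X : feval a (X *m w) = feval (w *m a) X by rewrite /feval mulmxA.
have PhiI_sub a : Phi_i R I n Phi i a -> PhiI i a by move/Phi_sub.
split=> a Pa; rewrite fevalM.
- apply: Y0; have [//|nPwa] := pselect (Phi_i R I n Phi i (w *m a)).
  by have := Z1 _ (w_roots _ (PhiI_sub _ Pa)) nPwa; rewrite -fevalM Zw0 ?eqxx.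
- move=> nPa; apply: Y1 => [|Pwa]; first exact: w_roots.
  by have := Zw1 _ Pa nPa; rewrite fevalM Z0 ?eqxx.
Qed.

Local Notation q i := (quot_map (fun Y Z : set_type (B_i i) =>
  orbit_i i (val Y) = orbit_i i (val Z))).

Lemma Bbar_i_quot_open i (A : set (set_type (B_i i))) :
  open A -> open (q i @` A).
Proof.
apply: (quot_map_open (F := fun Y : set_type (B_i i) => orbit_i i (val Y))).
move=> {}A [N oN <-].
have [_ _ [_ PhiI_refl] _ _] := PhiI_root i.
pose good w := W i w /\ exists2 Z, B_i i Z & B_i i (Z *m w).
exists (\bigcup_(w in good) [set Y | N (Y *m w)]).
  apply: bigcup_open => w _.
  by move: (mulmxr_continuous (p := 1) (M := w)) => /continuousP; apply.
apply/seteqP; split=> Y /=.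
- case=> w [Ww [Z BZ BZw]] NYw.
  have w_roots a := weyl_group_roots (a := a) PhiI_refl Ww.
  exists (exist (fun x => x \in B_i i) _
    (mem_set (Bset_i_mulmx w_roots BZ BZw (set_mem (valP Y))))) => //.
  by apply/orbit_i_eq; exists w.
- case=> Z NZ /orbit_i_eq [w Ww eZ]; exists w; last first.
    by move: NZ; rewrite !set_valE /= eZ.
  split=> //; exists (val Y); first exact: set_mem (valP Y).
  by rewrite -eZ; exact: set_mem (valP Z).
Qed.

Definition Bbar_coords (x : set_type B) :
    prod_topology (fun i => Bbar_i R I n S PhiI Phi i) :=
  prod_map (fun i => q i) (split_box Bset_box x).

Lemma Bbar_coords_continuous : continuous Bbar_coords.
Proof.
move=> x; apply: continuous_comp; first exact: split_box_continuous.
by apply: prod_map_continuous => i; exact: quot_map_continuous.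
Qed.

Lemma Bbar_coords_open A : open A -> open (Bbar_coords @` A).
Proof.
move=> oA; rewrite /Bbar_coords -(image_comp (split_box Bset_box)).
exact/prod_map_open/split_box_open/oA/Bbar_i_quot_open.
Qed.

Lemma Bbar_coords_surj p : exists x, Bbar_coords x = p.
Proof.
have /(_ _)/cid qsurj i := quot_map_surj (p i).
exists (glue_box Bset_box (fun i => projT1 (qsurj i))).
rewrite /Bbar_coords glue_boxK; apply: functional_extensionality_dep => i.
exact: projT2 (qsurj i).
Qed.

Lemma Bbar_coords_eq x y :
  Bbar_coords x = Bbar_coords y <-> orbit_g (val x) = orbit_g (val y).
Proof.
rewrite orbit_g_eq; split=> [xy i|xy].
  by have /quot_map_eq := congr1 (fun p => p i) xy.
by apply: functional_extensionality_dep => i; apply/quot_map_eq; exact: xy.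
Qed.

End Chambers.

Theorem corollary3p1 (R : realType) (I : finType) (n : I -> nat)
  (S : forall i, 'M[CC R]_(n i)) (PhiI : forall i, set ('cV[CC R]_(n i)))
  (hS : forall i, nondeg_sym_form (S i))
  (hPhiI : forall i, is_root_system (S i) (PhiI i))
  (Phi : set (groot R I n))
  (hPhi : root_subsystem R I n S PhiI Phi) :
  homeomorphic (Bbar R I n S PhiI Phi)
               (prod_topology (fun i : I => Bbar_i R I n S PhiI Phi i)).
Proof.
have S_sym i := (hS i).1.
apply: (quotient_homeomorphic
  (F := fun x : set_type (Bset R I n PhiI Phi) => orbit_g R I n S PhiI (val x))
  (h := @Bbar_coords R I n S PhiI Phi)).
- exact: Bbar_coords_continuous.
- exact: (@Bbar_coords_open R I n S PhiI S_sym hPhiI Phi hPhi.1).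
- exact: Bbar_coords_surj.
- exact: Bbar_coords_eq.
Qed.
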